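(* Let $\eta=i\pi Q/P$ with positive integers $Q<P$, let $\kappa\in\mathbb{C}$, $n\ge P$, and let $\lambda_1,\dots,\lambda_n,\mu_1,\dots,\mu_n\in\mathbb{C}$ be such that all entries of $\Omega_\kappa(\{\lambda\},\{\mu\}|\{\lambda\})$ are finite. Suppose there are distinct indices $a_1,\dots,a_P$ with $\sinh(\lambda_{a_{j+1}}-\lambda_{a_j}+\eta)=0$ for $j=1,\dots,P$, where $a_{P+1}:=a_1$. Then $\det_n\Omega_\kappa(\{\lambda\},\{\mu\}|\{\lambda\})=0$.
   Context: $\xi_1,\dots,\xi_M\in\mathbb{C}$ are fixed; $a(\lambda)=\prod_{j=1}^M\sinh(\lambda-\xi_j+\eta)$, $d(\lambda)=\prod_{j=1}^M\sinh(\lambda-\xi_j)$, $t(\lambda,\mu)=\frac{\sinh\eta}{\sinh(\lambda-\mu)\sinh(\lambda-\mu+\eta)}$. For sets $\{\lambda_1..\lambda_n\}$, $\{\mu_1..\mu_n\}$, $\{\nu_1..\nu_{n'}\}$, $\Omega_\kappa(\{\lambda\},\{\mu\}|\{\nu\})$ is the $n\times n$ matrix with entries $(\Omega_\kappa)_{jk}=a(\mu_k)t(\lambda_j,\mu_k)\prod_{c=1}^{n'}\sinh(\nu_c-\mu_k+\eta)-\kappa\,d(\mu_k)t(\mu_k,\lambda_j)\prod_{c=1}^{n'}\sinh(\nu_c-\mu_k-\eta)$. *)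

From HB Require Import structures.
From mathcomp Require Import all_boot all_order all_algebra.
From mathcomp Require Import all_classical all_reals all_analysis.
From mathcomp Require Import complex.
Set Implicit Arguments. Unset Strict Implicit. Unset Printing Implicit Defensive.
Import Order.TTheory GRing.Theory Num.Theory.
Local Open Scope ring_scope.
Local Open Scope complex_scope.

Definition Csinh (R : realType) (z : R[i]) : R[i] :=
  let: x +i* y := z in
  ((expR x - expR (- x)) / 2 * cos y) +i* ((expR x + expR (- x)) / 2 * sin y).

Definition afun (R : realType) (M : nat) (xi : 'I_M -> R[i]) (eta l : R[i]) : R[i] :=
  \prod_(j < M) Csinh (l - xi j + eta).
Definition dfun (R : realType) (M : nat) (xi : 'I_M -> R[i]) (l : R[i]) : R[i] :=
  \prod_(j < M) Csinh (l - xi j).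

Definition tfun (R : realType) (eta l m : R[i]) : R[i] :=
  Csinh eta / (Csinh (l - m) * Csinh (l - m + eta)).

Definition Omega (R : realType) (M : nat) (xi : 'I_M -> R[i]) (eta kappa : R[i])
  (n n' : nat) (lam mu : 'I_n -> R[i]) (nu : 'I_n' -> R[i]) : 'M[R[i]]_n :=
  \matrix_(j < n, k < n)
    (afun xi eta (mu k) * tfun eta (lam j) (mu k)
       * \prod_(c < n') Csinh (nu c - mu k + eta)
     - kappa * dfun xi (mu k) * tfun eta (mu k) (lam j)
       * \prod_(c < n') Csinh (nu c - mu k - eta)).

Definition eta_QP (R : realType) (Q P : nat) : R[i] :=
  0 +i* (pi * Q%:R / P%:R).

From HB Require Import structures.
From mathcomp Require Import all_boot all_order all_algebra.
From mathcomp Require Import all_classical all_reals all_analysis.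
From mathcomp Require Import complex.
From mathcomp Require Import ring.
Import Order.TTheory GRing.Theory Num.Theory.
Local Open Scope ring_scope.
Local Open Scope complex_scope.
Set Implicit Arguments. Unset Strict Implicit.

(* Writing t(l, m) = coth(l - m) - coth(l - m + eta), the hypothesis
   sinh(l_{a_{j+1}} - l_{a_j} + eta) = 0 identifies coth(l_{a_j} - m + eta)
   with coth(l_{a_{j+1}} - m), and coth(m - l_{a_j} + eta) with
   coth(m - l_{a_{j+1}}).  Summed along the cycle a_1, ..., a_P both
   t(l_{a_j}, m) and t(m, l_{a_j}) telescope to 0, so the rows a_1, ..., a_P
   of Omega add up to the zero row and the determinant vanishes.  The value
   of eta plays no role beyond making such a cycle possible. *)

Lemma det0_rows_sum0 (F : fieldType) (n P : nat) (A : 'M[F]_n)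
    (a : 'I_P -> 'I_n) :
  (0 < P)%N -> injective a -> (forall k, \sum_(i < P) A (a i) k = 0) ->
  \det A = 0.
Proof.
move=> P_gt0 a_inj rows_sum0; apply/eqP/det0P.
exists (\row_j (j \in a @: setT)%:R).
  apply/eqP => /rowP/(_ (a (Ordinal P_gt0))).
  by rewrite !mxE imset_f ?in_setT //; apply/eqP; rewrite oner_eq0.
apply/rowP => k; rewrite !mxE -[RHS](rows_sum0 k).
under eq_bigr do rewrite mxE mulr_natl mulrb.
rewrite -big_mkcond big_imset => [|i j _ _ /a_inj //].
by apply: eq_bigl => i; rewrite in_setT.
Qed.

Lemma telescope_ordS (V : zmodType) (P : nat) (f : 'I_P -> V) :
  \sum_(i < P) (f (ordS i) - f i) = 0.
Proof. by rewrite sumrB [X in _ - X](reindex_inj (@ordS_inj P)) subrr. Qed.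

Section HyperbolicCotangent.
Variable R : realType.
Implicit Types u v w : R[i].

Definition Ccosh u : R[i] :=
  let: x +i* y := u in
  ((expR x + expR (- x)) / 2 * cos y) +i* ((expR x - expR (- x)) / 2 * sin y).

Definition Ccoth u : R[i] := Ccosh u / Csinh u.

Lemma CsinhB u v : Csinh (u - v) = Csinh u * Ccosh v - Ccosh u * Csinh v.
Proof.
case: u => x1 y1; case: v => x2 y2; rewrite /Csinh /Ccosh /=.
apply/eqP; rewrite eq_complex /=; apply/andP; split; apply/eqP.
all: rewrite ?opprB ?expRB ?expRN ?cosB ?sinB.
all: have ex1 : expR x1 != 0 by rewrite gt_eqF ?expR_gt0.
all: have ex2 : expR x2 != 0 by rewrite gt_eqF ?expR_gt0.
all: by field; rewrite ex1 ex2 ?pnatr_eq0.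
Qed.

Lemma CcothB u v : Csinh u != 0 -> Csinh v != 0 ->
  Csinh (u - v) / (Csinh u * Csinh v) = Ccoth v - Ccoth u.
Proof. by move=> su sv; rewrite CsinhB /Ccoth; field; rewrite su sv. Qed.

Lemma Ccoth_eq w v : Csinh w != 0 -> Csinh v != 0 -> Csinh (v - w) = 0 ->
  Ccoth w = Ccoth v.
Proof.
by move=> sw sv svw; apply/eqP; rewrite -subr_eq0 -CcothB // svw mul0r.
Qed.

Lemma tfun_Ccoth e l m : Csinh (l - m) * Csinh (l - m + e) != 0 ->
  tfun e l m = Ccoth (l - m) - Ccoth (l - m + e).
Proof.
rewrite mulf_eq0 negb_or => /andP[s1 s2].
rewrite -CcothB // /tfun [X in _ / X]mulrC.
by congr (Csinh _ / _); ring.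
Qed.

End HyperbolicCotangent.

Section EtaCycle.
Variables (R : realType) (e : R[i]) (P : nat) (l : 'I_P -> R[i]).
Hypothesis l_cycle : forall i, Csinh (l (ordS i) - l i + e) = 0.

Lemma sum_tfun_cycle_l m :
  (forall i, Csinh (l i - m) * Csinh (l i - m + e) != 0) ->
  \sum_(i < P) tfun e (l i) m = 0.
Proof.
move=> t_fin; rewrite -[RHS](telescope_ordS (fun i => Ccoth (l i - m + e))).
apply: eq_bigr => i _; rewrite tfun_Ccoth //; congr (_ - _).
move: (t_fin i) (t_fin (ordS i)); rewrite !mulf_eq0 !negb_or.
move=> /andP[si _] /andP[_ sSi]; apply: Ccoth_eq => //.
by rewrite -(l_cycle i); congr Csinh; ring.
Qed.

Lemma sum_tfun_cycle_r m :
  (forall i, Csinh (m - l i) * Csinh (m - l i + e) != 0) ->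
  \sum_(i < P) tfun e m (l i) = 0.
Proof.
move=> t_fin; rewrite -[RHS]oppr0.
rewrite -[X in - X](telescope_ordS (fun i => Ccoth (m - l i))).
rewrite -sumrN; apply: eq_bigr => i _; rewrite opprB tfun_Ccoth //.
congr (_ - _); move: (t_fin i) (t_fin (ordS i)); rewrite !mulf_eq0 !negb_or.
move=> /andP[_ si] /andP[sSi _]; apply/esym/Ccoth_eq => //.
by rewrite -(l_cycle i); congr Csinh; ring.
Qed.

End EtaCycle.

Lemma Omega_rows_sum (R : realType) (M : nat) (xi : 'I_M -> R[i])
    (e kappa : R[i]) (n n' : nat) (lam mu : 'I_n -> R[i]) (nu : 'I_n' -> R[i])
    (P : nat) (a : 'I_P -> 'I_n) (k : 'I_n) :
  \sum_(i < P) Omega xi e kappa lam mu nu (a i) k =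
    afun xi e (mu k) * (\sum_(i < P) tfun e (lam (a i)) (mu k))
      * \prod_(c < n') Csinh (nu c - mu k + e)
    - kappa * dfun xi (mu k) * (\sum_(i < P) tfun e (mu k) (lam (a i)))
      * \prod_(c < n') Csinh (nu c - mu k - e).
Proof.
under eq_bigr do rewrite mxE.
by rewrite sumrB -!mulr_suml -!mulr_sumr.
Qed.

Theorem mainTheorem5 (R : realType) (M : nat) (xi : 'I_M -> R[i])
  (Q P : nat) (hQ : (0 < Q)%N) (hQP : (Q < P)%N)
  (kappa : R[i]) (n : nat) (hn : (P <= n)%N)
  (lam mu : 'I_n -> R[i])
  (hfin : forall j k : 'I_n,
     Csinh (lam j - mu k) * Csinh (lam j - mu k + eta_QP R Q P) != 0 /\
     Csinh (mu k - lam j) * Csinh (mu k - lam j + eta_QP R Q P) != 0)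
  (a : 'I_P -> 'I_n) (ha : injective a)
  (hcyc : forall j : 'I_P,
     Csinh (lam (a (ordS j)) - lam (a j) + eta_QP R Q P) = 0) :
  \det (Omega xi (eta_QP R Q P) kappa lam mu lam) = 0.
Proof.
have P_gt0 : (0 < P)%N := leq_trans hQ (ltnW hQP).
apply: (det0_rows_sum0 P_gt0 ha) => k; rewrite Omega_rows_sum.
have -> : \sum_(i < P) tfun (eta_QP R Q P) (lam (a i)) (mu k) = 0.
  apply: (sum_tfun_cycle_l (l := fun i => lam (a i))) => // i.
  by case: (hfin (a i) k).
have -> : \sum_(i < P) tfun (eta_QP R Q P) (mu k) (lam (a i)) = 0.
  apply: (sum_tfun_cycle_r (l := fun i => lam (a i))) => // i.
  by case: (hfin (a i) k).
by rewrite !mulr0 !mul0r subrr.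
Qed.
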